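(* Let $1<a<b$ be coprime integers and let $D,E\subseteq G$ be subdiagrams. Then \[ B'(\mathbf{1}_D,\mathbf{1}_E)=|D|-\#\{(i,j)\in D\times U_E:\ i\to j\}. \]
   Context: Fix coprime integers $1<a<b$. Work in the grid $\mathbb{Z}^2$ ($+x$ east, $+y$ north). Let $g:\mathbb{Z}^2\to\mathbb{Z}$, $g(x,y)=ab-ax-by$, and $G=\{(x,y)\in\mathbb{Z}_{\ge1}^2: g(x,y)>0\}$. A subdiagram is a subset $D\subseteq G$ such that whenever $(x,y)\in D$, $(x',y')\in G$, $x'\le x$, $y'\le y$, we have $(x',y')\in D$. $\mathbf{1}_D$ denotes the indicator vector of $D$ in $\mathbb{R}^G$. Define the (non-symmetric) bilinear form on $\mathbb{R}^G$ \[ B'(\mathbf{n},\mathbf{n}')=\sum_{i,j\in G}\big(\mathbf{1}_{0\le g(j)-g(i)<a}-\mathbf{1}_{b\le g(j)-g(i)<a+b}\big)\,n_in'_j. \] For cells $i,j\in\mathbb{Z}^2$, write $i\to j$ iff $0\le g(j)-g(i)<a$. For a subdiagram $E$, $U_E=\{(x,y)\in\mathbb{Z}^2: (x,y)\notin E,\ (x,y-1)\in E\cup(\mathbb{Z}_{\ge1}\times\mathbb{Z}_{\le0})\}$. *)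

From Stdlib Require Import ZArith List Bool.
Import ListNotations.
Open Scope Z_scope.

Definition g (a b : Z) (p : Z * Z) : Z := a * b - a * fst p - b * snd p.

Definition inG (a b : Z) (p : Z * Z) : bool :=
  (1 <=? fst p) && (1 <=? snd p) && (0 <? g a b p).

Definition zrange (lo hi : Z) : list Z :=
  map (fun k => lo + Z.of_nat k) (seq 0 (Z.to_nat (hi - lo + 1))).

(* the box [1,b] x [1,a]; it contains G (g > 0 forces x < b, y < a) *)
Definition box (a b : Z) : list (Z * Z) := list_prod (zrange 1 b) (zrange 1 a).

Definition Glist (a b : Z) : list (Z * Z) := filter (inG a b) (box a b).

Definition subdiagram (a b : Z) (D : Z * Z -> bool) : Prop :=
  (forall p, D p = true -> inG a b p = true) /\
  (forall p q, D p = true -> inG a b q = true ->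
     fst q <= fst p -> snd q <= snd p -> D q = true).

Definition ind (D : Z * Z -> bool) (p : Z * Z) : Z := if D p then 1 else 0.

Definition sumZ {A} (l : list A) (f : A -> Z) : Z := fold_right (fun x s => f x + s) 0 l.

Definition Bcoef (a b : Z) (i j : Z * Z) : Z :=
  let d := g a b j - g a b i in
  (if (0 <=? d) && (d <? a) then 1 else 0) - (if (b <=? d) && (d <? a + b) then 1 else 0).

Definition Bprime (a b : Z) (n n' : Z * Z -> Z) : Z :=
  sumZ (Glist a b) (fun i => sumZ (Glist a b) (fun j => Bcoef a b i j * n i * n' j)).

Definition arrow (a b : Z) (i j : Z * Z) : bool :=
  (0 <=? g a b j - g a b i) && (g a b j - g a b i <? a).

Definition inU (E : Z * Z -> bool) (p : Z * Z) : bool :=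
  negb (E p) && (E (fst p, snd p - 1) || ((1 <=? fst p) && (snd p - 1 <=? 0))).

Definition cardD (a b : Z) (D : Z * Z -> bool) : nat := length (filter D (Glist a b)).

(* #{(i,j) in D x U_E : i -> j}.  i ranges over G (D is a subset of G);
   j ranges over the box [1,b]x[1,a], which contains every j in U_E with i -> j
   for some i in G. *)
Definition arrowCount (a b : Z) (D E : Z * Z -> bool) : nat :=
  length (filter (fun ij => D (fst ij) && inU E (snd ij) && arrow a b (fst ij) (snd ij))
                 (list_prod (Glist a b) (box a b))).

(** Both sums telescope.  Since g(x, y+1) = g(x, y) - b, the coefficient
    B'(i, (x, y)) is [i -> (x, y)] - [i -> (x, y+1)]; summing against 1_E down
    a column (summation by parts, E being downward closed) leaves [i -> (x, 1)]
    minus the arrows from i into the cells of U_E in that column.  Since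
    g(x+1, y) = g(x, y) - a, the indicator [i -> (x, 1)] is in turn
    [g i <= g(x, 1)] - [g i <= g(x+1, 1)], so it sums to 1 over the bottom row
    [1, b] x {1} as soon as 0 < g i <= ab - a - b, i.e. for every cell i of G. *)

From Stdlib Require Import ZArith List Bool Lia.
Open Scope Z_scope.

Ltac case_Zcmp := repeat match goal with
  | |- context [Z.leb ?x ?y] => destruct (Z.leb_spec x y)
  | |- context [Z.ltb ?x ?y] => destruct (Z.ltb_spec x y)
  end; cbn [andb orb negb Z.b2z].

Lemma sumZ_cons {A} (x : A) l f : sumZ (x :: l) f = f x + sumZ l f.
Proof. reflexivity. Qed.

Lemma sumZ_app {A} (l1 l2 : list A) f : sumZ (l1 ++ l2) f = sumZ l1 f + sumZ l2 f.
Proof. induction l1 as [|x l IH]; simpl; [|rewrite IH]; lia. Qed.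

Lemma sumZ_map {A B} (h : B -> A) l f : sumZ (map h l) f = sumZ l (fun x => f (h x)).
Proof. induction l as [|x l IH]; simpl; [|rewrite IH]; reflexivity. Qed.

Lemma sumZ_ext {A} (l : list A) f f' :
  (forall x, In x l -> f x = f' x) -> sumZ l f = sumZ l f'.
Proof. induction l as [|x l IH]; simpl; intros H; [|rewrite H, IH]; auto. Qed.

Lemma sumZ_zero {A} (l : list A) : sumZ l (fun _ => 0) = 0.
Proof. induction l as [|x l IH]; simpl; [|rewrite IH]; reflexivity. Qed.

Lemma sumZ_add {A} (l : list A) f f' : sumZ l (fun x => f x + f' x) = sumZ l f + sumZ l f'.
Proof. induction l as [|x l IH]; simpl; [|rewrite IH]; lia. Qed.

Lemma sumZ_sub {A} (l : list A) f f' : sumZ l (fun x => f x - f' x) = sumZ l f - sumZ l f'.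
Proof. induction l as [|x l IH]; simpl; [|rewrite IH]; lia. Qed.

Lemma sumZ_mul_l {A} (l : list A) c f : sumZ l (fun x => c * f x) = c * sumZ l f.
Proof. induction l as [|x l IH]; simpl; [|rewrite IH]; lia. Qed.

Lemma sumZ_filter {A} (p : A -> bool) l f :
  sumZ (filter p l) f = sumZ l (fun x => if p x then f x else 0).
Proof. induction l as [|x l IH]; simpl; [|destruct (p x); simpl; rewrite IH]; lia. Qed.

Lemma length_filter_sumZ {A} (p : A -> bool) l :
  Z.of_nat (length (filter p l)) = sumZ l (fun x => Z.b2z (p x)).
Proof.
  induction l as [|x l IH]; simpl; [reflexivity|].
  destruct (p x); cbn [length Z.b2z]; rewrite ?Nat2Z.inj_succ, IH; lia.
Qed.

Lemma sumZ_list_prod {A B} (l1 : list A) (l2 : list B) f :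
  sumZ (list_prod l1 l2) f = sumZ l1 (fun x => sumZ l2 (fun y => f (x, y))).
Proof. induction l1 as [|x l IH]; [reflexivity|]; cbn [list_prod]; rewrite sumZ_app, sumZ_map, IH; reflexivity. Qed.

Lemma in_zrange lo hi x : In x (zrange lo hi) -> lo <= x <= hi.
Proof.
  unfold zrange; intros Hx; apply in_map_iff in Hx as [k [<- Hk]].
  apply in_seq in Hk; lia.
Qed.

Lemma sumZ_zrange_telescope (F : Z -> Z) lo hi :
  lo <= hi + 1 -> sumZ (zrange lo hi) (fun y => F y - F (y + 1)) = F lo - F (hi + 1).
Proof.
  intros Hle; unfold zrange; rewrite sumZ_map.
  enough (Hs : forall n s, sumZ (seq s n) (fun k => F (lo + Z.of_nat k) - F (lo + Z.of_nat k + 1))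
                           = F (lo + Z.of_nat s) - F (lo + Z.of_nat (s + n))).
  { rewrite Hs, Nat.add_0_l, Z2Nat.id by lia; f_equal; f_equal; lia. }
  induction n as [|n IH]; intros s; cbn [seq].
  - rewrite Nat.add_0_r; cbn; lia.
  - rewrite sumZ_cons, IH, Nat.add_succ_comm, Nat2Z.inj_succ, <- Z.add_1_r, Z.add_assoc; lia.
Qed.

Lemma g_shift_x a b x y : g a b (x + 1, y) = g a b (x, y) - a.
Proof. unfold g; cbn; lia. Qed.

Lemma g_shift_y a b x y : g a b (x, y + 1) = g a b (x, y) - b.
Proof. unfold g; cbn; lia. Qed.

Lemma inG_g_bounds a b p : 0 <= a -> 0 <= b -> inG a b p = true -> 0 < g a b p <= a * b - a - b.
Proof.
  destruct p as [x y]; unfold inG, g; cbn [fst snd].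
  rewrite !andb_true_iff, Z.leb_le, Z.leb_le, Z.ltb_lt; intros; nia.
Qed.

Lemma arrow_telescope a b i x y : 0 <= a ->
  Z.b2z (arrow a b i (x, y)) =
  Z.b2z (g a b i <=? g a b (x, y)) - Z.b2z (g a b i <=? g a b (x + 1, y)).
Proof. intros Ha; unfold arrow; rewrite g_shift_x; case_Zcmp; lia. Qed.

Lemma Bcoef_telescope a b i x y :
  Bcoef a b i (x, y) = Z.b2z (arrow a b i (x, y)) - Z.b2z (arrow a b i (x, y + 1)).
Proof. unfold Bcoef, arrow; rewrite g_shift_y; case_Zcmp; lia. Qed.

Lemma bottom_row_arrow_sum a b i : 0 < a -> 0 < b -> inG a b i = true ->
  sumZ (zrange 1 b) (fun x => Z.b2z (arrow a b i (x, 1))) = 1.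
Proof.
  intros Ha Hb Hi; apply inG_g_bounds in Hi; try lia.
  pose (F x := Z.b2z (g a b i <=? g a b (x, 1))).
  rewrite (sumZ_ext _ _ (fun x => F x - F (x + 1)))
    by (intros x _; apply arrow_telescope; lia).
  rewrite sumZ_zrange_telescope by lia; unfold F.
  set (gi := g a b i) in *; unfold g; cbn [fst snd]; case_Zcmp; nia.
Qed.

Section Subdiagram.

Variables (a b : Z) (E : Z * Z -> bool).
Hypotheses (Ha : 0 < a) (Hb : 0 < b) (HE : subdiagram a b E).

Lemma subdiagram_top_row x : 0 <= x -> E (x, a) = false.
Proof.
  intros Hx; destruct (E (x, a)) eqn:Exa; auto.
  apply (proj1 HE), inG_g_bounds in Exa; try lia; unfold g in Exa; cbn in Exa; nia.
Qed.

Lemma subdiagram_step_down x y : 1 < y -> E (x, y) = true -> E (x, y - 1) = true.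
Proof.
  intros Hy Exy; apply (proj2 HE (x, y)); cbn [fst snd]; try lia; auto.
  apply (proj1 HE) in Exy; revert Exy; unfold inG, g; cbn [fst snd]; case_Zcmp; nia.
Qed.

(** Column x seen from below: cell (x, 0) counts as occupied, matching the
    second disjunct in the definition of U_E. *)
Let occupied x y := (y <=? 0) || E (x, y).

Lemma inU_occupied x y : 1 <= x -> 1 <= y ->
  inU E (x, y) = negb (occupied x y) && occupied x (y - 1).
Proof.
  intros Hx Hy; unfold inU, occupied; cbn [fst snd].
  destruct (Z.leb_spec y 0); [lia|]; destruct (Z.leb_spec (y - 1) 0), (Z.leb_spec 1 x);
    cbn [andb orb]; rewrite ?orb_true_r, ?orb_false_r; lia || reflexivity.
Qed.

Lemma occupied_step_down x y : 1 <= y -> occupied x y = true -> occupied x (y - 1) = true.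
Proof.
  unfold occupied; intros Hy; destruct (Z.leb_spec y 0); [lia|]; cbn [orb]; intros Exy.
  destruct (Z.eq_dec y 1) as [->|Hy1]; [reflexivity|].
  now rewrite subdiagram_step_down, orb_true_r by (assumption || lia).
Qed.

Lemma column_sum i x : 1 <= x ->
  sumZ (zrange 1 a) (fun y => Bcoef a b i (x, y) * ind E (x, y)
                              + Z.b2z (inU E (x, y) && arrow a b i (x, y)))
  = Z.b2z (arrow a b i (x, 1)).
Proof.
  intros Hx.
  pose (F y := Z.b2z (arrow a b i (x, y)) * Z.b2z (occupied x (y - 1))).
  rewrite (sumZ_ext _ _ (fun y => F y - F (y + 1))).
  - rewrite sumZ_zrange_telescope by lia; unfold F; rewrite Z.add_simpl_r.
    unfold occupied at 2; rewrite subdiagram_top_row by lia.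
    destruct (Z.leb_spec a 0); [lia|]; cbn; lia.
  - intros y Hy; apply in_zrange in Hy; unfold F; rewrite Z.add_simpl_r.
    rewrite Bcoef_telescope, inU_occupied by lia.
    pose proof (occupied_step_down x y (proj1 Hy)) as Hdown.
    replace (ind E (x, y)) with (Z.b2z (occupied x y))
      by (unfold occupied, ind; destruct (Z.leb_spec y 0); [lia|reflexivity]).
    destruct (occupied x y) eqn:Ey; [rewrite (Hdown eq_refl)|];
      destruct (occupied x (y - 1)), (arrow a b i (x, y)), (arrow a b i (x, y + 1)); cbn; lia.
Qed.

Lemma Bcoef_row_sum i : inG a b i = true ->
  sumZ (Glist a b) (fun j => Bcoef a b i j * ind E j)
  = 1 - sumZ (box a b) (fun j => Z.b2z (inU E j && arrow a b i j)).
Proof.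
  intros Hi; unfold Glist; rewrite sumZ_filter.
  rewrite (sumZ_ext _ _ (fun j => Bcoef a b i j * ind E j)).
  2: { intros j _; destruct (inG a b j) eqn:Gj; [reflexivity|].
       unfold ind; destruct (E j) eqn:Ej; [|lia].
       now rewrite (proj1 HE j Ej) in Gj. }
  rewrite <- (bottom_row_arrow_sum a b i) by assumption.
  unfold box; rewrite !sumZ_list_prod, <- sumZ_sub.
  apply sumZ_ext; intros x Hx; apply in_zrange in Hx.
  rewrite <- (column_sum i x) by lia.
  rewrite sumZ_add; lia.
Qed.

End Subdiagram.

Theorem lemma4p1 (a b : Z) (D E : Z * Z -> bool) :
  1 < a -> a < b -> Z.gcd a b = 1 ->
  subdiagram a b D -> subdiagram a b E ->
  Bprime a b (ind D) (ind E) = Z.of_nat (cardD a b D) - Z.of_nat (arrowCount a b D E).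
Proof.
  intros Ha Hab _ _ HE.
  unfold Bprime, cardD, arrowCount.
  rewrite !length_filter_sumZ, sumZ_list_prod, <- sumZ_sub.
  apply sumZ_ext; intros i Hi; cbn [fst snd].
  assert (Gi : inG a b i = true) by (apply filter_In in Hi; tauto).
  rewrite (sumZ_ext _ _ (fun j => ind D i * (Bcoef a b i j * ind E j))) by (intros; lia).
  rewrite sumZ_mul_l; unfold ind at 1; destruct (D i); cbn [andb Z.b2z].
  - rewrite (Bcoef_row_sum a b E) by (auto; lia); lia.
  - rewrite sumZ_zero; lia.
Qed.
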